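(* For every finite set $\Xi\subset\mathbb{F}^2$ of distinct points, the Maximal Cartesian Subset Construction procedure described in the context (for any admissible choices made in step 3) terminates after finitely many iterations, and the set $\Xi'$ it returns is a maximal cartesian subset of $\Xi$, i.e. $\Xi'$ is cartesian and there is no cartesian subset $\Xi''\subseteq\Xi$ with $\Xi'\subsetneq\Xi''$.
   Context: $\mathbb{F}$ is a field. A finite set $\mathcal{A}\subset\mathbb{N}_0^2$ is a lower set if with each $(\alpha_1,\alpha_2)$ it contains all $(\alpha_1',\alpha_2')\in\mathbb{N}_0^2$ with $\alpha_1'\le\alpha_1,\alpha_2'\le\alpha_2$. A finite set of distinct points is cartesian if it equals $\{(x_i,y_j):(i,j)\in\mathcal{A}\}$ for a lower set $\mathcal{A}$, pairwise distinct $x_i$ and pairwise distinct $y_j$. $S_x(\Xi)$: with horizontal lines through points of $\Xi$ (one per distinct ordinate) numbered $l^x_0,\dots,l^x_\nu$ so that $l^x_j$ contains $m_j+1$ points and $m_0\ge\cdots\ge m_\nu$, $S_x(\Xi)=\{(i,j):0\le j\le\nu,0\le i\le m_j\}$; $S_y(\Xi)$ is defined symmetrically with vertical lines. A maximal row subset of $\Xi$ is a non-empty set of the form $\Xi\cap\ell$ for a horizontal line $\ell$. Procedure: start with $\Xi'=\emptyset$ and the working set equal to the input $\Xi$. (1) If the working set $\Xi$ is empty, return $\Xi'$. (2) If $S_x(\Xi)=S_y(\Xi)$, replace $\Xi'$ by $\Xi'\cup\Xi$ and return $\Xi'$. (3) Otherwise choose a maximal row subset $A$ of the current $\Xi$ of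 maximal cardinality; remove from $\Xi$ all points of $A$ and all points whose abscissa differs from every abscissa of the points of $A$; replace $\Xi'$ by $\Xi'\cup A$; go to (1). The returned $\Xi'$ is compared against subsets of the original input set. *)

From HB Require Import structures.
From mathcomp Require Import all_boot all_order all_algebra.
Set Implicit Arguments. Unset Strict Implicit. Unset Printing Implicit Defensive.

Section MCS.
Variable F : fieldType.
Local Notation pt := (F * F)%type.

(* Finite point sets are represented by duplicate-free sequences; set
   operations are understood via membership. *)

Definition lower_set (A : seq (nat * nat)) : Prop :=
  forall a b : nat * nat, a \in A -> b.1 <= a.1 -> b.2 <= a.2 -> b \in A.

Definition cartesian (S : seq pt) : Prop :=
  exists (A : seq (nat * nat)) (x y : nat -> F),
    [/\ lower_set A,
        (forall a b, a \in A -> b \in A -> x a.1 = x b.1 -> a.1 = b.1),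
        (forall a b, a \in A -> b \in A -> y a.2 = y b.2 -> a.2 = b.2)
      & (forall p : pt, p \in S <-> exists2 a, a \in A & p = (x a.1, y a.2))].

Definition row_count (S : seq pt) (b : F) : nat := count (fun p => p.2 == b) S.
Definition col_count (S : seq pt) (a : F) : nat := count (fun p => p.1 == a) S.

(* sizes m_0+1 >= m_1+1 >= ... of the horizontal lines *)
Definition row_sizes (S : seq pt) : seq nat :=
  sort geq [seq row_count S b | b <- undup [seq p.2 | p <- S]].
Definition col_sizes (S : seq pt) : seq nat :=
  sort geq [seq col_count S a | a <- undup [seq p.1 | p <- S]].

(* S_x(S) = {(i,j) : 0 <= j <= nu, 0 <= i <= m_j} *)
Definition in_Sx (S : seq pt) (ij : nat * nat) : bool :=
  (ij.2 < size (row_sizes S)) && (ij.1 < nth 0 (row_sizes S) ij.2).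
(* S_y(S) = {(i,j) : 0 <= i <= mu, 0 <= j <= n_i} *)
Definition in_Sy (S : seq pt) (ij : nat * nat) : bool :=
  (ij.1 < size (col_sizes S)) && (ij.2 < nth 0 (col_sizes S) ij.1).

Definition Sx_eq_Sy (S : seq pt) : Prop := forall ij, in_Sx S ij = in_Sy S ij.

(* State of the procedure: (Xi', working set Xi). *)
Definition state := (seq pt * seq pt)%type.

Inductive mcs_step : state -> state -> Prop :=
| MCSStep (acc W : seq pt) (b : F) :
    W != [::] -> ~ Sx_eq_Sy W ->
    b \in [seq p.2 | p <- W] ->
    (forall b', row_count W b' <= row_count W b) ->
    let A := [seq p <- W | p.2 == b] in
    mcs_step (acc, W)
      (acc ++ A, [seq p <- W | (p.2 != b) && (p.1 \in [seq q.1 | q <- A])]).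

Inductive mcs_return : state -> seq pt -> Prop :=
| MCSEmpty (acc : seq pt) : mcs_return (acc, [::]) acc
| MCSEq (acc W : seq pt) : W != [::] -> Sx_eq_Sy W -> mcs_return (acc, W) (acc ++ W).

Inductive mcs_output : state -> seq pt -> Prop :=
| MCSOutRet s res : mcs_return s res -> mcs_output s res
| MCSOutStep s s' res : mcs_step s s' -> mcs_output s' res -> mcs_output s res.

Definition maximal_cartesian_subset (Xi Xi' : seq pt) : Prop :=
  [/\ cartesian Xi', {subset Xi' <= Xi} &
      forall Xi'' : seq pt, cartesian Xi'' -> {subset Xi'' <= Xi} ->
        {subset Xi' <= Xi''} -> {subset Xi'' <= Xi'}].

End MCS.

From HB Require Import structures.
From mathcomp Require Import all_boot all_order all_algebra.
From Stdlib Require Import Classical Wf_nat.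
Set Implicit Arguments. Unset Strict Implicit. Unset Printing Implicit Defensive.

(* A point set is cartesian iff it is corner closed: of the two other corners of the
   rectangle spanned by two of its points, at least one lies in the set.  In a corner
   closed set any two columns are nested, so ranking columns and rows by decreasing length
   turns the set into a lower set.
   Let [b] be a longest row of [W] and [Z] a corner closed subset of [W] containing it.
   Each point [r] of [Z] has [(r.1, b)] in [Z], for otherwise the corners paired with row
   [b] would make row [r.2] of [Z] longer than row [b].  So [Z] consists of row [b] and of
   points off row [b] whose abscissa meets row [b], and that second part is corner closed
   again: step (3) loses no maximal extension.  If [S_x = S_y], the row and column lengths
   are conjugate partitions; a longest row then meets every column and removing it keeps
   [S_x = S_y], so by induction the set is corner closed and step (2) is correct too. *)

Lemma exists_argmax_seq (T : eqType) (f : T -> nat) (s : seq T) :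
  s != [::] -> exists2 x, x \in s & forall y, y \in s -> f y <= f x.
Proof.
elim: s => // a s IH _; have [s0 | /IH[b bs maxb]] := eqVneq s [::].
  by exists a => [|y]; rewrite ?mem_head // s0 mem_seq1 => /eqP->.
have [le_ab | lt_ba] := leqP (f a) (f b).
  exists b => [|y]; first by rewrite inE bs orbT.
  by rewrite inE => /predU1P[-> | /maxb].
exists a => [|y]; first exact: mem_head.
by rewrite inE => /predU1P[-> // | /maxb le_yb]; exact: leq_trans le_yb (ltnW lt_ba).
Qed.

Lemma size_filter_lt (T : eqType) (a : pred T) (s : seq T) x :
  x \in s -> ~~ a x -> size [seq y <- s | a y] < size s.
Proof.
move=> xs nax; rewrite size_filter -(count_predC a) -addn1 leq_add2l -has_count.
by apply/hasP; exists x.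
Qed.

Lemma eq_count_uniq (T : eqType) (P : pred T) (s1 s2 : seq T) :
  uniq s1 -> uniq s2 -> (forall x, P x -> (x \in s1) = (x \in s2)) ->
  count P s1 = count P s2.
Proof.
move=> u1 u2 eq12; rewrite -!size_filter; apply/perm_size/uniq_perm; rewrite ?filter_uniq //.
by move=> x; rewrite !mem_filter; case: (boolP (P x)) => //= /eq12.
Qed.

Lemma count_sorted_geq (s : seq nat) i j : sorted geq s ->
  (j < size s) && (i < nth 0 s j) = (j < count (leq i.+1) s).
Proof.
elim: s j => [|c s IH] j; first by case: j.
rewrite /= (path_sortedE (fun _ _ _ h1 h2 => leq_trans h2 h1)).
move=> /andP[/allP le_s_c sorted_s].
have [lt_ic | le_ci] := ltnP i c; first by case: j => [|j]; rewrite //= add1n ltnS IH.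
have no_longer : count (leq i.+1) s = 0.
  apply/eqP; rewrite -leqn0 leqNgt -has_count; apply/hasP => -[d /le_s_c le_dc].
  by rewrite ltnNge (leq_trans le_dc le_ci).
case: j => [|j]; rewrite /= add0n no_longer; first by rewrite ltnNge le_ci.
by rewrite ltnS IH // no_longer.
Qed.

Section CornerClosed.
Variable F : fieldType.
Local Notation pt := (F * F)%type.

Definition corner_closed (S : seq pt) : Prop :=
  forall p q, p \in S -> q \in S -> (p.1, q.2) \in S \/ (q.1, p.2) \in S.

Definition column (S : seq pt) (a : F) : seq F := undup [seq p.2 | p <- S & p.1 == a].

Lemma mem_column (S : seq pt) a c : (c \in column S a) = ((a, c) \in S).
Proof.
rewrite mem_undup; apply/mapP/idP => [[p] | acS].
  by rewrite mem_filter => /andP[/eqP <- pS] ->; rewrite -surjective_pairing.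
by exists (a, c); rewrite // mem_filter eqxx.
Qed.

Lemma mem_swap_pair (S : seq pt) a b : ((a, b) \in map swap_pair S) = ((b, a) \in S).
Proof. by rewrite -[(a, b)]/(swap_pair (b, a)) (mem_map (can_inj swap_pairK)). Qed.

Lemma corner_closed_swap (S : seq pt) : corner_closed S -> corner_closed (map swap_pair S).
Proof.
move=> ccS [a b] [c d]; rewrite /= !mem_swap_pair => abS cdS.
by case: (ccS _ _ cdS abS) => h; [left | right].
Qed.

Lemma corner_closed_filter (X Y : pred F) (S : seq pt) :
  corner_closed S -> corner_closed [seq p <- S | X p.1 && Y p.2].
Proof.
move=> ccS p q; rewrite !mem_filter => /andP[/andP[Xp Yp] pS] /andP[/andP[Xq Yq] qS].
by case: (ccS p q pS qS) => h; [left | right]; rewrite /= h ?Xp ?Yq ?Xq ?Yp.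
Qed.

(* If some [c] lay in column [a'] but not in column [a], corner closedness would put all
   of column [a] into column [a'], making column [a'] strictly larger. *)
Lemma column_sub (S : seq pt) a a' : corner_closed S ->
  size (column S a') <= size (column S a) -> {subset column S a' <= column S a}.
Proof.
move=> ccS le_a'a c ca'; have [// | nca] := boolP (c \in column S a).
have sub_aa' : {subset column S a <= column S a'}.
  move=> d; rewrite !mem_column => adS; rewrite mem_column in ca'.
  by case: (ccS _ _ adS ca') => /= [acS | //]; rewrite mem_column acS in nca.
have [_ eq_aa'] := uniq_min_size (undup_uniq _) sub_aa' le_a'a.
by rewrite eq_aa' ca' in nca.
Qed.

Definition columns_by_size (S : seq pt) : seq F :=
  sort (fun a a' => size (column S a') <= size (column S a)) (undup [seq p.1 | p <- S]).

Lemma mem_columns_by_size (S : seq pt) a :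
  (a \in columns_by_size S) = (a \in [seq p.1 | p <- S]).
Proof. by rewrite mem_sort mem_undup. Qed.

Lemma columns_by_size_uniq (S : seq pt) : uniq (columns_by_size S).
Proof. by rewrite sort_uniq undup_uniq. Qed.

Lemma column_nth_sub (S : seq pt) i i' :
  corner_closed S -> i' <= i -> i < size (columns_by_size S) ->
  {subset column S (nth 0%R (columns_by_size S) i)
       <= column S (nth 0%R (columns_by_size S) i')}.
Proof.
move=> ccS le_i'i lt_i; apply: column_sub => //.
have sorted_cols : sorted (fun a a' => size (column S a') <= size (column S a))
    (columns_by_size S) by apply: sort_sorted => a a'; exact: leq_total.
apply: (sorted_leq_nth _ _ _ sorted_cols) => //; rewrite ?inE ?(leq_ltn_trans le_i'i) //.
by move=> a a' a'' h1 h2; exact: leq_trans h2 h1.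
Qed.

Section Grid.
Variable S : seq pt.
Local Notation xs := (columns_by_size S).
Local Notation ys := (columns_by_size (map swap_pair S)).

Lemma mem_columns_by_size_swap b : (b \in ys) = (b \in [seq p.2 | p <- S]).
Proof. by rewrite mem_columns_by_size -map_comp. Qed.

Definition grid : seq (nat * nat) := [seq (index p.1 xs, index p.2 ys) | p <- S].

Lemma nth_index_point p :
  p \in S -> (nth 0%R xs (index p.1 xs), nth 0%R ys (index p.2 ys)) = p.
Proof.
move=> pS; have p1 : p.1 \in xs by rewrite mem_columns_by_size map_f.
have p2 : p.2 \in ys by rewrite mem_columns_by_size_swap map_f.
by rewrite !nth_index // -surjective_pairing.
Qed.

Lemma mem_grid i j :
  ((i, j) \in grid) = [&& i < size xs, j < size ys & (nth 0%R xs i, nth 0%R ys j) \in S].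
Proof.
apply/mapP/and3P => [[p pS [-> ->]] | [lt_i lt_j ijS]].
  rewrite !index_mem mem_columns_by_size mem_columns_by_size_swap !map_f //.
  by rewrite nth_index_point.
exists (nth 0%R xs i, nth 0%R ys j) => //.
by rewrite /= !index_uniq ?columns_by_size_uniq.
Qed.

Lemma grid_lower_set : corner_closed S -> lower_set grid.
Proof.
move=> ccS [i j] [i' j'] /=; rewrite !mem_grid => /and3P[lt_i lt_j ijS] le_i'i le_j'j.
have i'jS : (nth 0%R xs i', nth 0%R ys j) \in S.
  by rewrite -mem_column (column_nth_sub ccS le_i'i lt_i) // mem_column.
rewrite (leq_ltn_trans le_i'i lt_i) (leq_ltn_trans le_j'j lt_j) -mem_swap_pair -mem_column.
apply: (column_nth_sub (corner_closed_swap ccS) le_j'j lt_j).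
by rewrite mem_column mem_swap_pair.
Qed.

Lemma corner_closed_cartesian : corner_closed S -> cartesian S.
Proof.
move=> ccS; exists grid, (nth 0%R xs), (nth 0%R ys); split; first exact: grid_lower_set.
- move=> [i j] [i' j']; rewrite !mem_grid => /and3P[lt_i _ _] /and3P[lt_i' _ _] /eqP.
  by rewrite nth_uniq ?columns_by_size_uniq // => /eqP.
- move=> [i j] [i' j']; rewrite !mem_grid => /and3P[_ lt_j _] /and3P[_ lt_j' _] /eqP.
  by rewrite nth_uniq ?columns_by_size_uniq // => /eqP.
move=> p; split => [pS | [[i j]]]; last by rewrite mem_grid => /and3P[_ _ ijS] ->.
by exists (index p.1 xs, index p.2 ys); rewrite ?map_f ?nth_index_point.
Qed.

End Grid.

Lemma cartesian_corner_closed (S : seq pt) : cartesian S -> corner_closed S.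
Proof.
move=> [A [x [y [lowA _ _ memS]]]] p q /memS[a aA ->] /memS[c cA ->] /=.
have [le_ac | lt_ca] := leqP a.1 c.1.
  by left; apply/memS; exists (a.1, c.2) => //; exact: (lowA c).
by right; apply/memS; exists (c.1, a.2) => //; apply: (lowA a) => //=; exact: ltnW.
Qed.

Lemma cartesianP (S : seq pt) : cartesian S <-> corner_closed S.
Proof. by split; [exact: cartesian_corner_closed | exact: corner_closed_cartesian]. Qed.

Lemma size_column_uniq (S : seq pt) a : uniq S -> size (column S a) = col_count S a.
Proof.
move=> uS; rewrite /column undup_id ?size_map ?size_filter //.
rewrite map_inj_in_uniq ?filter_uniq // => p q.
rewrite !mem_filter => /andP[/eqP p1 _] /andP[/eqP q1 _] eq2.
by rewrite [p]surjective_pairing [q]surjective_pairing p1 q1 eq2.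
Qed.

Lemma size_row_uniq (S : seq pt) b :
  uniq S -> size (column (map swap_pair S) b) = row_count S b.
Proof.
move=> uS; rewrite size_column_uniq ?(map_inj_uniq (can_inj swap_pairK)) //.
by rewrite /col_count count_map.
Qed.

Lemma row_count_gt0 (S : seq pt) b : (0 < row_count S b) = (b \in [seq p.2 | p <- S]).
Proof. by rewrite -has_count; apply/hasP/mapP => [[p pS /eqP <-] | [p pS ->]]; exists p. Qed.

Lemma col_count_gt0 (S : seq pt) a : (0 < col_count S a) = (a \in [seq p.1 | p <- S]).
Proof. by rewrite -has_count; apply/hasP/mapP => [[p pS /eqP <-] | [p pS ->]]; exists p. Qed.

Lemma exists_max_row (W : seq pt) : W != [::] ->
  exists2 b, b \in [seq p.2 | p <- W] & forall b', row_count W b' <= row_count W b.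
Proof.
move=> /(exists_argmax_seq (fun p : pt => row_count W p.2)) [q qW maxq].
exists q.2 => [|b']; first exact: map_f.
have [-> // | ] := posnP (row_count W b').
by rewrite row_count_gt0 => /mapP[p pW ->]; exact: maxq.
Qed.

Lemma corner_closed_max_row (W Z : seq pt) b r :
  uniq W -> corner_closed Z -> {subset Z <= W} ->
  (forall p, p \in W -> p.2 = b -> p \in Z) ->
  (forall b', row_count W b' <= row_count W b) -> r \in Z -> (r.1, b) \in Z.
Proof.
move=> uW ccZ sZW rowbZ maxb rZ.
have sub_col c : {subset column (map swap_pair Z) c <= column (map swap_pair W) c}.
  by move=> d; rewrite !mem_column !mem_swap_pair => /sZW.
have rowb : {subset column (map swap_pair W) b <= column (map swap_pair Z) b}.
  by move=> d; rewrite !mem_column !mem_swap_pair => dbW; exact: rowbZ dbW erefl.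
rewrite -mem_swap_pair -mem_column.
apply: (column_sub (a' := r.2) (corner_closed_swap ccZ)); last first.
  by rewrite mem_column mem_swap_pair -surjective_pairing.
rewrite (leq_trans (uniq_leq_size (undup_uniq _) (sub_col r.2))) //.
rewrite (size_row_uniq r.2 uW) (leq_trans (maxb r.2)) // -(size_row_uniq b uW).
exact: uniq_leq_size (undup_uniq _) rowb.
Qed.

Lemma corner_closed_add_full_row (S T : seq pt) b :
  corner_closed S -> {subset S <= T} -> (forall p, p \in T -> p.2 != b -> p \in S) ->
  (forall p, p \in T -> (p.1, b) \in T) -> corner_closed T.
Proof.
move=> ccS sST offb full p q pT qT.
have [qb | qb] := eqVneq q.2 b; first by left; rewrite qb full.
have [pb | pb] := eqVneq p.2 b; first by right; rewrite pb full.
by case: (ccS p q (offb p pT pb) (offb q qT qb)) => h; [left | right]; apply: sST.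
Qed.

End CornerClosed.

Section ConjugateLineSizes.
Variable F : fieldType.
Local Notation pt := (F * F)%type.

Definition nrows_gt (S : seq pt) i :=
  count (fun b => i < row_count S b) (undup [seq p.2 | p <- S]).
Definition ncols_gt (S : seq pt) j :=
  count (fun a => j < col_count S a) (undup [seq p.1 | p <- S]).

Lemma in_Sx_nrows_gt (S : seq pt) i j : in_Sx S (i, j) = (j < nrows_gt S i).
Proof.
rewrite /in_Sx count_sorted_geq ?count_sort ?count_map //.
by apply: sort_sorted => m n; exact: leq_total.
Qed.

Lemma in_Sy_ncols_gt (S : seq pt) i j : in_Sy S (i, j) = (i < ncols_gt S j).
Proof.
rewrite /in_Sy count_sorted_geq ?count_sort ?count_map //.
by apply: sort_sorted => m n; exact: leq_total.
Qed.

Section RemoveMaxRow.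
Variables (W : seq pt) (b : F).
Hypotheses (uW : uniq W) (maxb : forall b', row_count W b' <= row_count W b).
Local Notation W' := [seq p <- W | p.2 != b].

Lemma row_count_remove c : row_count W' c = if c == b then 0 else row_count W c.
Proof.
rewrite /row_count count_filter; have [-> | cb] := eqVneq c b.
  by apply/eqP; rewrite -leqn0 leqNgt -has_count; apply/hasP => -[p _ /andP[/eqP-> /negP]].
by apply: eq_count => p /=; have [-> | //] := eqVneq p.2 c; rewrite cb.
Qed.

Lemma nrows_gt_remove i : nrows_gt W' i = (nrows_gt W i).-1.
Proof.
set L := undup [seq p.2 | p <- W].
have -> : nrows_gt W' i = count (fun c => (c != b) && (i < row_count W c)) L.
  rewrite /nrows_gt -(eq_count (a1 := fun c => i < row_count W' c)); last first.
    by move=> c; rewrite row_count_remove; case: eqP.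
  apply: eq_count_uniq; rewrite ?undup_uniq // => c lt_ic.
  have pos_c := leq_ltn_trans (leq0n i) lt_ic.
  rewrite !mem_undup -!row_count_gt0 pos_c.
  by move: pos_c; rewrite row_count_remove; case: eqP.
have [lt_ib | le_bi] := ltnP i (row_count W b).
  have bL : b \in L by rewrite mem_undup -row_count_gt0 (leq_ltn_trans _ lt_ib).
  rewrite /nrows_gt -/L [in RHS](permP (perm_to_rem bL)) /= lt_ib.
  rewrite rem_filter ?undup_uniq // count_filter add1n /=.
  by apply: eq_count => c; rewrite andbC.
have shorter c : (i < row_count W c) = false by rewrite ltnNge (leq_trans (maxb c) le_bi).
by rewrite /nrows_gt !(@eq_count _ _ pred0) ?count_pred0 // => c; rewrite shorter ?andbF.
Qed.

Hypothesis SW : Sx_eq_Sy W.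

(* [S_x = S_y] at [(row_count W b, 0)] says there are at most [row_count W b] columns. *)
Lemma max_row_full r : r \in W -> (r.1, b) \in W.
Proof.
move=> rW; set m := row_count W b; set absc := undup [seq p.1 | p <- W].
have no_longer : nrows_gt W m = 0.
  apply/eqP; rewrite -leqn0 leqNgt -has_count; apply/hasP => -[c _].
  by rewrite ltnNge maxb.
have ncols0 : ncols_gt W 0 = size absc.
  rewrite /ncols_gt -count_predT; apply: eq_in_count => a.
  by rewrite mem_undup -col_count_gt0.
have le_absc_m : size absc <= m.
  move: (SW (m, 0)); rewrite in_Sx_nrows_gt in_Sy_ncols_gt no_longer ncols0.
  by move=> /esym/negbT; rewrite -leqNgt.
have row_b_sub : {subset column (map swap_pair W) b <= absc}.
  by move=> a; rewrite mem_column mem_swap_pair mem_undup => abW; exact: (map_f fst abW).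
have [|_ eq_row_b] := uniq_min_size (undup_uniq _) row_b_sub; first by rewrite size_row_uniq.
by rewrite -mem_swap_pair -mem_column eq_row_b mem_undup map_f.
Qed.

Lemma col_count_remove_full a :
  a \in [seq p.1 | p <- W] -> col_count W a = (col_count W' a).+1.
Proof.
move=> /mapP[q qW ->].
rewrite /col_count count_filter -[LHS]size_filter -(count_predC (fun p => p.2 != b)).
rewrite !count_filter addnC.
have -> : count (predI (predC (fun p => p.2 != b)) (fun p => p.1 == q.1)) W
          = count_mem (q.1, b) W.
  by apply: eq_count => p; rewrite /= negbK [p in RHS]surjective_pairing xpair_eqE andbC.
rewrite count_uniq_mem // max_row_full // add1n; congr _.+1.
by apply: eq_count => p; exact: andbC.
Qed.

Lemma ncols_gt_remove j : ncols_gt W' j = ncols_gt W j.+1.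
Proof.
set L := undup [seq p.1 | p <- W].
rewrite /ncols_gt -(@eq_in_count _ (fun a => j < col_count W' a) _ L).
  apply: eq_count_uniq; rewrite ?undup_uniq // => a lt_ja.
  have aW' : a \in [seq p.1 | p <- W'].
    by rewrite -col_count_gt0 (leq_ltn_trans (leq0n j) lt_ja).
  rewrite !mem_undup aW'; move: aW' => /mapP[p]; rewrite mem_filter => /andP[_ pW] ->.
  by rewrite map_f.
by move=> a; rewrite mem_undup => /col_count_remove_full ->.
Qed.

Lemma Sx_eq_Sy_remove_max_row : Sx_eq_Sy W'.
Proof.
move=> [i j]; rewrite in_Sx_nrows_gt in_Sy_ncols_gt nrows_gt_remove ncols_gt_remove.
by rewrite ltn_predRL -in_Sx_nrows_gt SW in_Sy_ncols_gt.
Qed.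

End RemoveMaxRow.

Lemma Sx_eq_Sy_corner_closed (W : seq pt) : uniq W -> Sx_eq_Sy W -> corner_closed W.
Proof.
have [n] := ubnP (size W); elim: n W => // n IH W lt_Wn uW SW.
have [-> p q // | W_ne] := eqVneq W [::].
have [b /mapP[q qW ->] maxb] := exists_max_row W_ne.
apply: (@corner_closed_add_full_row _ [seq p <- W | p.2 != q.2] _ q.2).
- apply: IH; [|exact: filter_uniq | exact: Sx_eq_Sy_remove_max_row].
  by rewrite -ltnS (leq_trans _ lt_Wn) // ltnS (size_filter_lt qW) //= negbK.
- by move=> p; rewrite mem_filter => /andP[].
- by move=> p pW pb; rewrite mem_filter pb.
- exact: max_row_full.
Qed.

End ConjugateLineSizes.

Section Procedure.
Variable F : fieldType.
Local Notation pt := (F * F)%type.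

Lemma mcs_step_size (s s' : state F) : mcs_step s s' -> size s'.2 < size s.2.
Proof. by case=> acc W b _ _ /mapP[p pW ->] _ /=; rewrite (size_filter_lt pW) //= eqxx. Qed.

Lemma mcs_step_wf : well_founded (fun s' s : state F => mcs_step s s').
Proof.
by apply: (well_founded_lt_compat _ (fun s => size s.2)) => s' s /mcs_step_size/ltP.
Qed.

Lemma mcs_output_exists (s : state F) : exists res, mcs_output s res.
Proof.
elim/(well_founded_ind mcs_step_wf): s => -[acc W] IH.
have [-> | W_ne] := eqVneq W [::]; first by exists acc; do 2!constructor.
have [SW | nSW] := classic (Sx_eq_Sy W).
  by exists (acc ++ W); constructor; exact: MCSEq.
have [b bW maxb] := exists_max_row W_ne.
have step := MCSStep acc W_ne nSW bW maxb.
by have [res out] := IH _ step; exists res; exact: MCSOutStep step out.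
Qed.

Definition maximal_corner_closed (W R : seq pt) : Prop :=
  [/\ corner_closed R, {subset R <= W} &
      forall Z, corner_closed Z -> {subset Z <= W} -> {subset R <= Z} -> {subset Z <= R}].

Section MaxRowStep.
Variables (W R' : seq pt) (b : F).
Hypotheses (uW : uniq W) (maxb : forall b', row_count W b' <= row_count W b).
Let A := [seq p <- W | p.2 == b].
Let absA := [seq q.1 | q <- A].
Let W' := [seq p <- W | (p.2 != b) && (p.1 \in absA)].
Hypothesis R'_maximal : maximal_corner_closed W' R'.

Lemma mem_row_of_absA a : a \in absA -> (a, b) \in A.
Proof.
move=> /mapP[q]; rewrite mem_filter => /andP[/eqP qb qW] ->.
by rewrite mem_filter -qb -surjective_pairing eqxx.
Qed.

Lemma maximal_corner_closed_step : maximal_corner_closed W (A ++ R').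
Proof.
have [ccR' sR'W' maxR'] := R'_maximal.
have sW'W : {subset W' <= W} by move=> p; rewrite mem_filter => /andP[].
split.
- apply: (corner_closed_add_full_row ccR' (b := b)).
  + by move=> p pR'; rewrite mem_cat pR' orbT.
  + by move=> p; rewrite mem_cat mem_filter => /orP[/andP[/eqP-> _] | //]; rewrite eqxx.
  + move=> p; rewrite !mem_cat => /orP[pA | /sR'W'].
      by rewrite mem_row_of_absA // map_f.
    by rewrite mem_filter => /andP[/andP[_ /mem_row_of_absA ->] _].
- by move=> p; rewrite mem_cat => /orP[| /sR'W' /sW'W]; rewrite // mem_filter => /andP[].
move=> Z ccZ sZW sAR'Z r rZ; rewrite mem_cat.
have [rb | rb] := eqVneq r.2 b; first by rewrite mem_filter rb eqxx sZW.
have rowbZ p : p \in W -> p.2 = b -> p \in Z.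
  by move=> pW pb; apply: sAR'Z; rewrite mem_cat mem_filter pb eqxx pW.
have rbZ := corner_closed_max_row uW ccZ sZW rowbZ maxb rZ.
apply/orP; right; apply: (maxR' [seq p <- Z | (p.1 \in absA) && (p.2 != b)]).
- exact: (@corner_closed_filter _ (mem absA) (fun c => c != b) _ ccZ).
- by move=> p; rewrite !mem_filter => /andP[/andP[-> ->] /sZW ->].
- move=> p pR'; have := sR'W' p pR'; rewrite !mem_filter => /andP[/andP[-> ->] _].
  by rewrite sAR'Z // mem_cat pR' orbT.
rewrite mem_filter rZ rb !andbT /absA; apply/mapP; exists (r.1, b) => //.
by rewrite mem_filter eqxx sZW.
Qed.

End MaxRowStep.

Lemma mcs_output_maximal (s : state F) res : mcs_output s res -> uniq s.2 ->
  exists2 R, res = s.1 ++ R & maximal_corner_closed s.2 R.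
Proof.
elim=> {s res} [_ _ [acc | acc W _ SW] | _ _ res [acc W b _ _ _ maxb A] _ IH] /= uW.
- by exists [::]; rewrite ?cats0 //; split=> // [p q | Z _ sZ _ p /sZ]; rewrite in_nil.
- by exists W => //; split => //; exact: Sx_eq_Sy_corner_closed.
have [R' -> maxR'] := IH (filter_uniq _ uW).
by exists (A ++ R'); rewrite ?catA //; exact: maximal_corner_closed_step.
Qed.

End Procedure.

Theorem mainTheorem7 (F : fieldType) (Xi : seq (F * F)) (Xi_uniq : uniq Xi) :
  [/\ Acc (fun s' s => mcs_step s s') ([::], Xi),
      (exists res, mcs_output ([::], Xi) res)
    & forall res, mcs_output ([::], Xi) res -> maximal_cartesian_subset Xi res].
Proof.
split; [exact: mcs_step_wf | exact: mcs_output_exists |].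
move=> res /mcs_output_maximal /(_ Xi_uniq) [R /= -> [ccR sRXi maxR]].
split=> //; first exact/cartesianP.
by move=> Z /cartesianP ccZ sZXi sRZ; exact: maxR.
Qed.
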